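(* Let $S=\{0,1,2,\dots\}$, $\lambda,\mu>0$, $\theta=\lambda/\mu$, and let $X$ be the continuous-time Markov chain on $S$ with rates $q(i,i+1)=\lambda$; $q(i,i-k)=\mu$ for $i\ge1$, $1\le k\le i$; $q(i,i)=-(\lambda+i\mu)$; all other off-diagonal rates $0$. Let $\tau$ be a probability on $S$, $\mathbf P^{(\tau)}$ the law of $X$ with initial distribution $\tau$, $F^{(\tau)}_{X(t)}(x)=\mathbf P^{(\tau)}\{X(t)\le x\}$, $T(x)=\sum_{n\le x}\tau(n)$, and $\Pi^*(x)=\sum_{n\le x}\pi^*(n)$ with $\pi^*(n)=\theta^n(n+1)/(\theta+1)_{n+1}$. Then for every $t\ge0$, $$\sup_{x\in\mathbb R}|\Pi^*(x)-F^{(\tau)}_{X(t)}(x)|\le\sup_{x\in\mathbb R}|\Pi^*(x)-T(x)|\cdot\exp\{-\mu t-\theta(e^{-\mu t}+\mu t-1)\}.$$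
   Context: $(a)_n$ denotes the rising factorial $a(a+1)\cdots(a+n-1)$, $(a)_0=1$. *)

From Stdlib Require Import Reals Lra.
From Coquelicot Require Import Coquelicot.
Open Scope R_scope.

Fixpoint rising (a : R) (n : nat) : R :=
  match n with
  | O => 1
  | S m => rising a m * (a + INR m)
  end.

Definition qrate (lam mu : R) (i j : nat) : R :=
  if Nat.eqb j (S i) then lam
  else if Nat.eqb j i then - (lam + INR i * mu)
  else if Nat.ltb j i then mu
  else 0.

Definition pistar (theta : R) (n : nat) : R :=
  theta ^ n * INR (S n) / rising (theta + 1) (S n).

Definition cdf (p : nat -> R) (x : R) : R :=
  Series (fun n => if Rle_dec (INR n) x then p n else 0).

(* p : R -> nat -> R is the family of one-dimensional marginal laws
   P^(tau){X(t) = j} of the chain with Q-matrix qrate lam mu and initial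
   law tau: a family of probability vectors, starting at tau, right
   continuous at 0 and satisfying the Kolmogorov forward equations. *)
Definition is_marginal_law (lam mu : R) (tau : nat -> R) (p : R -> nat -> R) : Prop :=
  (forall j, p 0 j = tau j) /\
  (forall t j, 0 <= t -> 0 <= p t j) /\
  (forall t, 0 <= t -> is_series (p t) 1) /\
  (forall j, filterlim (fun s => p s j) (at_right 0) (locally (tau j))) /\
  (forall t j, 0 < t ->
     is_derive (fun s => p s j) t (Series (fun i => p t i * qrate lam mu i j))).

Definition sup_dist (F G : R -> R) : Rbar :=
  Lub_Rbar (fun y => exists x : R, y = Rabs (F x - G x)).

From Stdlib Require Import Reals Lra Lia Factorial.
From Coquelicot Require Import Coquelicot.
Open Scope R_scope.

(* Let D_m(t) = Pi*(m) - P{X(t) <= m}.  The chain moves up by one step at a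
   time, so the forward equations summed over j <= m involve only D_m and
   D_(m-1); with the balance identity theta pi*(m) = (m+1) (1 - Pi*(m)) they give
     D_m' = -(lam + (m+1) mu) D_m + lam D_(m-1),   D_(-1) = 0.
   Hence E_m(t) = D_m(t) exp((lam + (m+1) mu) t) satisfies E_0' = 0 and
   E_m' = lam e^(mu t) E_(m-1), and by induction
     |E_m(t)| <= M sum_(k <= m) A(t)^k / k!,   A(t) = theta (e^(mu t) - 1),
   where M = sup_m |D_m(0)|.  Since A(t) = e^(mu t) theta (1 - e^(-mu t)), the
   truncated exponential is at most e^(m mu t) exp(theta (1 - e^(-mu t))), and
   the factor e^(m mu t) is absorbed by exp(-(lam + (m+1) mu) t) uniformly in m. *)

Lemma Series_finite_support (a : nat -> R) m :
  (forall n, (m < n)%nat -> a n = 0) -> Series a = sum_f_R0 a m.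
Proof.
  intros Ha. apply is_series_unique.
  apply (filterlim_ext_loc (fun _ => sum_f_R0 a m)); [|apply filterlim_const].
  exists m. intros n Hn. rewrite sum_n_Reals.
  induction Hn as [|n Hn IH]; [reflexivity|].
  simpl. rewrite <- IH, (Ha (S n)) by lia. ring.
Qed.

Lemma is_series_sum_f_R0 (a : nat -> nat -> R) (l : nat -> R) m :
  (forall j, is_series (a j) (l j)) ->
  is_series (fun i => sum_f_R0 (fun j => a j i) m) (sum_f_R0 l m).
Proof.
  intros Ha. induction m as [|m IH]; [apply Ha|].
  exact (is_series_plus _ _ _ _ IH (Ha (S m))).
Qed.

Lemma cdf_neg (a : nat -> R) x : x < 0 -> cdf a x = 0.
Proof.
  intros Hx. unfold cdf.
  rewrite (Series_finite_support _ 0).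
  - simpl. destruct (Rle_dec 0 x); [lra|reflexivity].
  - intros n _. destruct (Rle_dec (INR n) x); [|reflexivity].
    pose proof (pos_INR n). lra.
Qed.

Lemma cdf_step (a : nat -> R) x m : INR m <= x < INR m + 1 -> cdf a x = sum_f_R0 a m.
Proof.
  intros Hx. unfold cdf.
  rewrite (Series_finite_support _ m).
  - apply sum_eq. intros n Hn. destruct (Rle_dec (INR n) x) as [|Hnx]; [reflexivity|].
    apply le_INR in Hn. lra.
  - intros n Hn. destruct (Rle_dec (INR n) x); [|reflexivity].
    apply le_INR in Hn. rewrite S_INR in Hn. lra.
Qed.

Lemma sum_dist_le_sup_dist (a b : nat -> R) m :
  Rbar_le (Rabs (sum_f_R0 a m - sum_f_R0 b m)) (sup_dist (cdf a) (cdf b)).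
Proof.
  apply (proj1 (Lub_Rbar_correct _)). exists (INR m).
  rewrite !(cdf_step _ (INR m) m) by lra. reflexivity.
Qed.

Lemma sup_dist_le (a b : nat -> R) M : 0 <= M ->
  (forall m, Rabs (sum_f_R0 a m - sum_f_R0 b m) <= M) ->
  Rbar_le (sup_dist (cdf a) (cdf b)) M.
Proof.
  intros HM Hab. apply (proj2 (Lub_Rbar_correct _)). intros y [x ->]. simpl.
  destruct (Rlt_or_le x 0) as [Hx|Hx].
  - rewrite !cdf_neg by exact Hx. rewrite Rminus_0_r, Rabs_R0. exact HM.
  - destruct (nfloor_ex x Hx) as [m Hm]. rewrite !(cdf_step _ x m) by exact Hm. apply Hab.
Qed.

Lemma rising_pos a n : 0 < a -> 0 < rising a n.
Proof.
  intros Ha. induction n as [|n IH]; simpl; [lra|].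
  pose proof (pos_INR n). apply Rmult_lt_0_compat; lra.
Qed.

Lemma pistar_partial_sum theta m : -1 < theta ->
  sum_f_R0 (pistar theta) m = 1 - theta ^ S m / rising (theta + 1) (S m).
Proof.
  intros Htheta.
  assert (Hr : forall k, 0 < rising (theta + 1) k) by (intros; apply rising_pos; lra).
  induction m as [|m IH].
  - unfold pistar. simpl. field. lra.
  - simpl sum_f_R0. rewrite IH. unfold pistar.
    change (rising (theta + 1) (S (S m)))
      with (rising (theta + 1) (S m) * (theta + 1 + INR (S m))).
    rewrite <- (tech_pow_Rmult theta (S m)), (S_INR (S m)).
    pose proof (Hr (S m)). pose proof (pos_INR (S m)).
    field. lra.
Qed.

Lemma pistar_balance theta m : -1 < theta ->
  theta * pistar theta m = INR (S m) * (1 - sum_f_R0 (pistar theta) m).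
Proof.
  intros Htheta. rewrite pistar_partial_sum by exact Htheta. unfold pistar.
  assert (0 < rising (theta + 1) (S m)) by (apply rising_pos; lra).
  simpl (theta ^ S m). field. lra.
Qed.

(* Rows i < m of Q are fully contained in j <= m and sum to 0; row m misses
   only its up-jump; a row i > m sees exactly m+1 down-jumps. *)
Lemma qrate_row_partial_sum lam mu i m :
  sum_f_R0 (qrate lam mu i) m =
  if (i <? m)%nat then 0 else if (i =? m)%nat then - lam else INR (S m) * mu.
Proof.
  induction m as [|m IH].
  - unfold qrate. destruct i; simpl; ring.
  - simpl sum_f_R0. rewrite IH. unfold qrate.
    destruct (Nat.ltb_spec i m); destruct (Nat.ltb_spec i (S m));
    destruct (Nat.eqb_spec (S m) (S i)); destruct (Nat.eqb_spec (S m) i);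
    destruct (Nat.eqb_spec i m); destruct (Nat.eqb_spec i (S m));
    destruct (Nat.ltb_spec (S m) i);
    try lia; subst; rewrite ?S_INR; ring.
Qed.

Lemma ex_series_qrate_column lam mu (q : nat -> R) j :
  ex_series q -> ex_series (fun i => q i * qrate lam mu i j).
Proof.
  intros Hq. apply (ex_series_incr_n _ (S j)).
  apply (ex_series_ext (fun k => mu * q (S j + k)%nat)).
  - intros k. unfold qrate.
    destruct (Nat.eqb_spec j (S (S j + k))); [lia|].
    destruct (Nat.eqb_spec j (S j + k)); [lia|].
    destruct (Nat.ltb_spec j (S j + k)); [apply Rmult_comm|lia].
  - apply (ex_series_scal_l mu (fun k => q (S j + k)%nat)), (ex_series_incr_n q (S j)), Hq.
Qed.

Lemma forward_partial_sum lam mu (q : nat -> R) l m : is_series q l ->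
  sum_f_R0 (fun j => Series (fun i => q i * qrate lam mu i j)) m
  = INR (S m) * mu * (l - sum_f_R0 q m) - lam * q m.
Proof.
  intros Hq. assert (Eq : ex_series q) by (exists l; exact Hq).
  set (r i := if (i <? m)%nat then 0 else if (i =? m)%nat then - lam else INR (S m) * mu).
  rewrite <- (is_series_unique _ _ (is_series_sum_f_R0
    (fun j i => q i * qrate lam mu i j) _ m
    (fun j => Series_correct _ (ex_series_qrate_column lam mu q j Eq)))).
  rewrite (Series_ext _ (fun i => q i * r i)).
  2:{ intros i. unfold r. rewrite <- qrate_row_partial_sum, scal_sum.
      apply sum_eq. intros k _. ring. }
  assert (Htail : forall k, r (S m + k)%nat = INR (S m) * mu).
  { intros k. unfold r. destruct (Nat.ltb_spec (S m + k) m); [lia|].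
    destruct (Nat.eqb_spec (S m + k) m); [lia|reflexivity]. }
  assert (Hhead : sum_f_R0 (fun i => q i * r i) m = - lam * q m).
  { unfold r. destruct m as [|m]; simpl.
    - ring.
    - rewrite (sum_eq _ (fun _ => 0)), sum_cte, Nat.ltb_irrefl, Nat.eqb_refl; [ring|].
      intros k Hk. destruct (Nat.ltb_spec k (S m)); [ring|lia]. }
  assert (Hex : ex_series (fun i => q i * r i)).
  { apply (ex_series_incr_n _ (S m)).
    apply (ex_series_ext (fun k => INR (S m) * mu * q (S m + k)%nat)).
    - intros k. rewrite Htail. apply Rmult_comm.
    - apply (ex_series_scal_l _ (fun k => q (S m + k)%nat)), (ex_series_incr_n q (S m)), Eq. }
  rewrite (Series_incr_n _ (S m)) by (lia || exact Hex).
  simpl Init.Nat.pred. rewrite Hhead.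
  rewrite (Series_ext _ (fun k => INR (S m) * mu * q (S m + k)%nat))
    by (intros k; rewrite Htail; ring).
  rewrite Series_scal_l, <- (is_series_unique _ _ Hq), (Series_incr_n q (S m)) by (lia || exact Eq).
  simpl Init.Nat.pred. ring.
Qed.

Section FilterlimArith.

Context {T : Type} {F : (T -> Prop) -> Prop} {FF : Filter F}.

Lemma filterlim_Rplus (f g : T -> R) a b :
  filterlim f F (locally a) -> filterlim g F (locally b) ->
  filterlim (fun x => f x + g x) F (locally (a + b)).
Proof. intros Hf Hg. exact (filterlim_comp_2 _ _ _ Hf Hg (filterlim_plus a b)). Qed.

Lemma filterlim_Rmult (f g : T -> R) a b :
  filterlim f F (locally a) -> filterlim g F (locally b) ->
  filterlim (fun x => f x * g x) F (locally (a * b)).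
Proof. intros Hf Hg. exact (filterlim_comp_2 _ _ _ Hf Hg (filterlim_mult a b)). Qed.

Lemma filterlim_Ropp (f : T -> R) a :
  filterlim f F (locally a) -> filterlim (fun x => - f x) F (locally (- a)).
Proof. intros Hf. eapply filterlim_comp; [exact Hf|apply (filterlim_opp a)]. Qed.

Lemma filterlim_sum_f_R0 (g : T -> nat -> R) (l : nat -> R) m :
  (forall j, filterlim (fun x => g x j) F (locally (l j))) ->
  filterlim (fun x => sum_f_R0 (g x) m) F (locally (sum_f_R0 l m)).
Proof.
  intros Hg. induction m as [|m IH]; [apply Hg|].
  exact (filterlim_Rplus _ _ _ _ IH (Hg (S m))).
Qed.

End FilterlimArith.

Lemma filterlim_at_right_continuous (f : R -> R) a :
  continuous f a -> filterlim f (at_right a) (locally (f a)).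
Proof. intros Hf. exact (filterlim_filter_le_1 _ (filter_le_within _) Hf). Qed.

Lemma le_of_derive_nonneg_at_right (f df : R -> R) a b : a <= b ->
  (forall x, a < x <= b -> is_derive f x (df x)) ->
  (forall x, a < x <= b -> 0 <= df x) ->
  filterlim f (at_right a) (locally (f a)) -> f a <= f b.
Proof.
  intros Hab Hd Hdf Hf.
  assert (Hmono : forall x, a < x <= b -> f x <= f b).
  { intros x Hx. destruct (Rle_lt_or_eq_dec x b (proj2 Hx)) as [Hxb| ->]; [|lra].
    destruct (MVT_cor3 f df x b Hxb) as (c & Hxc & Hcb & Hfb).
    { intros y Hxy Hyb. apply is_derive_Reals, Hd. lra. }
    assert (0 <= df c * (b - x)) by (apply Rmult_le_pos; [apply Hdf|]; lra).
    lra. }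
  destruct (Rle_lt_or_eq_dec a b Hab) as [Hlt| ->]; [|lra].
  (* The filter instance is given explicitly: typeclass search for it diverges. *)
  apply (@closed_filterlim_loc _ _ _ (Proper_StrongProper _ (at_right_proper_filter a))
           f (fun y => y <= f b) (f a) Hf); [|apply closed_le].
  exists (mkposreal _ (proj2 (Rlt_0_minus _ _) Hlt)). intros x Hx Hax.
  apply Hmono. split; [exact Hax|].
  unfold ball in Hx; simpl in Hx; unfold AbsRing_ball, abs, minus, plus, opp in Hx; simpl in Hx.
  apply Rabs_lt_between in Hx. lra.
Qed.

Lemma abs_le_of_derive_abs_le (f w df dw : R -> R) a b : a <= b ->
  (forall x, a < x <= b -> is_derive f x (df x)) ->
  (forall x, a < x <= b -> is_derive w x (dw x)) ->
  (forall x, a < x <= b -> Rabs (df x) <= dw x) ->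
  filterlim f (at_right a) (locally (f a)) ->
  filterlim w (at_right a) (locally (w a)) ->
  Rabs (f a) <= w a -> Rabs (f b) <= w b.
Proof.
  intros Hab Hf Hw Hdfw Hfa Hwa Ha.
  assert (Hminus : w a - f a <= w b - f b).
  { apply (le_of_derive_nonneg_at_right (fun x => w x - f x) (fun x => dw x - df x) a b Hab).
    - intros x Hx. apply (is_derive_minus w f); auto.
    - intros x Hx. specialize (Hdfw x Hx). apply Rabs_le_between in Hdfw. lra.
    - apply filterlim_Rplus; [exact Hwa|apply filterlim_Ropp, Hfa]. }
  assert (Hplus : w a + f a <= w b + f b).
  { apply (le_of_derive_nonneg_at_right (fun x => w x + f x) (fun x => dw x + df x) a b Hab).
    - intros x Hx. apply (is_derive_plus w f); auto.
    - intros x Hx. specialize (Hdfw x Hx). apply Rabs_le_between in Hdfw. lra.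
    - apply filterlim_Rplus; [exact Hwa|exact Hfa]. }
  apply Rabs_le_between in Ha. apply Rabs_le_between. lra.
Qed.

Lemma is_derive_mult_exp (f : R -> R) c x df d :
  is_derive f x df -> d = (df + c * f x) * exp (c * x) ->
  is_derive (fun s => f s * exp (c * s)) x d.
Proof.
  intros Hf ->.
  replace ((df + c * f x) * exp (c * x)) with (df * exp (c * x) + f x * (c * exp (c * x))) by ring.
  apply (is_derive_mult f (fun s => exp (c * s))); [exact Hf| |intros; apply Rmult_comm].
  auto_derive; [exact I|ring].
Qed.

Lemma is_derive_sum_f_R0 (g : R -> nat -> R) (dg : nat -> R) x m :
  (forall j, is_derive (fun s => g s j) x (dg j)) ->
  is_derive (fun s => sum_f_R0 (g s) m) x (sum_f_R0 dg m).
Proof.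
  intros Hg. induction m as [|m IH]; [apply Hg|].
  exact (is_derive_plus _ _ _ _ _ IH (Hg (S m))).
Qed.

Definition exp_taylor (m : nat) (x : R) : R := sum_f_R0 (fun k => x ^ k / INR (fact k)) m.

Lemma exp_taylor_0 x : exp_taylor 0 x = 1.
Proof. unfold exp_taylor. simpl. field. Qed.

Lemma exp_taylor_at_0 m : exp_taylor m 0 = 1.
Proof.
  unfold exp_taylor. induction m as [|m IH]; simpl; [field|].
  rewrite IH. unfold Rdiv. ring.
Qed.

Lemma is_derive_pow_div_fact k x :
  is_derive (fun t => t ^ S k / INR (fact (S k))) x (x ^ k / INR (fact k)).
Proof.
  replace (x ^ k / INR (fact k)) with (/ INR (fact (S k)) * (INR (S k) * 1 * x ^ Nat.pred (S k))).
  - apply (is_derive_ext (fun t => / INR (fact (S k)) * t ^ S k)); [intros t; apply Rmult_comm|].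
    apply is_derive_scal, is_derive_pow, (is_derive_id (K := R_AbsRing)).
  - rewrite fact_simpl, mult_INR. pose proof (INR_fact_neq_0 k). pose proof (pos_INR k).
    rewrite S_INR. simpl. field. lra.
Qed.

Lemma is_derive_exp_taylor_S m x : is_derive (exp_taylor (S m)) x (exp_taylor m x).
Proof.
  induction m as [|m IH].
  - replace (exp_taylor 0 x) with (0 + x ^ 0 / INR (fact 0)) by (unfold exp_taylor; simpl; ring).
    apply (is_derive_plus (exp_taylor 0)); [|apply is_derive_pow_div_fact].
    apply (is_derive_ext (fun _ => 1)); [intros t; symmetry; apply exp_taylor_0|].
    apply (is_derive_const 1 x).
  - exact (is_derive_plus _ _ _ _ _ IH (is_derive_pow_div_fact (S m) x)).
Qed.

Lemma exp_taylor_scale_le m z y : 1 <= z -> 0 <= y ->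
  exp_taylor m (z * y) <= z ^ m * exp_taylor m y.
Proof.
  intros Hz Hy. unfold exp_taylor. rewrite scal_sum. apply sum_Rle. intros k Hk.
  assert (z ^ k <= z ^ m) by (apply Rle_pow; assumption).
  assert (0 <= y ^ k / INR (fact k)).
  { apply Rmult_le_pos; [apply pow_le; exact Hy|].
    left. apply Rinv_0_lt_compat, INR_fact_lt_0. }
  rewrite Rpow_mult_distr.
  replace (z ^ k * y ^ k / INR (fact k)) with (z ^ k * (y ^ k / INR (fact k)))
    by (unfold Rdiv; ring).
  rewrite (Rmult_comm _ (z ^ m)). apply Rmult_le_compat_r; assumption.
Qed.

Lemma pow_exp x n : exp x ^ n = exp (INR n * x).
Proof.
  induction n as [|n IH]; [simpl; rewrite Rmult_0_l, exp_0; reflexivity|].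
  rewrite S_INR, Rmult_plus_distr_r, Rmult_1_l, exp_plus, <- IH. simpl. ring.
Qed.

Section Chain.

Variables lam mu : R.
Hypotheses (Hlam : 0 < lam) (Hmu : 0 < mu).

Definition decay_rate m := lam + INR (S m) * mu.

Definition envelope m s := exp_taylor m (lam / mu * (exp (mu * s) - 1)).

Lemma envelope_at_0 m : envelope m 0 = 1.
Proof.
  unfold envelope. rewrite Rmult_0_r, exp_0, Rminus_eq_0, Rmult_0_r. apply exp_taylor_at_0.
Qed.

Lemma is_derive_envelope_0 s : is_derive (envelope 0) s 0.
Proof.
  apply (is_derive_ext (fun _ => 1)); [intros; symmetry; apply exp_taylor_0|].
  apply (is_derive_const 1 s).
Qed.

Lemma is_derive_envelope_S m s :
  is_derive (envelope (S m)) s (lam * exp (mu * s) * envelope m s).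
Proof.
  unfold envelope.
  replace (lam * exp (mu * s) * exp_taylor m (lam / mu * (exp (mu * s) - 1)))
    with (lam / mu * (mu * exp (mu * s)) * exp_taylor m (lam / mu * (exp (mu * s) - 1)))
    by (field; lra).
  apply (is_derive_comp (exp_taylor (S m)) (fun s => lam / mu * (exp (mu * s) - 1))).
  - apply is_derive_exp_taylor_S.
  - auto_derive; [exact I|ring].
Qed.

Lemma envelope_right_cont m : filterlim (envelope m) (at_right 0) (locally (envelope m 0)).
Proof.
  apply filterlim_at_right_continuous.
  apply (ex_derive_continuous (K := R_AbsRing) (V := R_NormedModule)).
  destruct m as [|m]; eexists; [apply is_derive_envelope_0|apply is_derive_envelope_S].
Qed.

(* With z = e^(mu t): the argument of the envelope is z * theta (1 - 1/z). *)
Lemma envelope_decay_le m t : 0 <= t ->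
  envelope m t * exp (- decay_rate m * t)
  <= exp (- mu * t - lam / mu * (exp (- mu * t) + mu * t - 1)).
Proof.
  intros Ht.
  set (z := exp (mu * t)). set (y := lam / mu * (1 - / z)).
  assert (Hz : 1 <= z).
  { pose proof (exp_ineq1_le (mu * t)). assert (0 <= mu * t) by (apply Rmult_le_pos; lra).
    unfold z. lra. }
  assert (Hy : 0 <= y).
  { assert (/ z <= 1) by (rewrite <- Rinv_1; apply Rinv_le_contravar; lra).
    apply Rmult_le_pos; [apply Rlt_le, Rdiv_lt_0_compat|]; lra. }
  assert (Harg : lam / mu * (exp (mu * t) - 1) = z * y) by (unfold y, z; field; fold z; lra).
  unfold envelope. rewrite Harg.
  apply Rle_trans with (z ^ m * exp y * exp (- decay_rate m * t)).
  - apply Rmult_le_compat_r; [left; apply exp_pos|].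
    apply Rle_trans with (z ^ m * exp_taylor m y); [apply exp_taylor_scale_le; assumption|].
    apply Rmult_le_compat_l; [apply pow_le; lra|apply exp_ge_taylor, Hy].
  - right. unfold y, z. rewrite pow_exp, <- exp_Ropp, Ropp_mult_distr_l, <- !exp_plus. f_equal.
    unfold decay_rate. rewrite S_INR. field. lra.
Qed.

Section Marginal.

Variables (tau : nat -> R) (p : R -> nat -> R).
Hypothesis Hp : is_marginal_law lam mu tau p.

Definition gap m s := sum_f_R0 (pistar (lam / mu)) m - sum_f_R0 (p s) m.

Definition scaled_gap m s := gap m s * exp (decay_rate m * s).

Lemma is_derive_gap m s : 0 < s ->
  is_derive (gap m) s (- lam * (pistar (lam / mu) m - p s m) - INR (S m) * mu * gap m s).
Proof.
  intros Hs. destruct Hp as (_ & _ & Hsum & _ & Hfwd).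
  assert (Hbal : lam * pistar (lam / mu) m
                 = INR (S m) * mu * (1 - sum_f_R0 (pistar (lam / mu)) m)).
  { transitivity (mu * (lam / mu * pistar (lam / mu) m)); [field; lra|].
    rewrite pistar_balance; [ring|]. assert (0 < lam / mu) by (apply Rdiv_lt_0_compat; lra). lra. }
  replace (- lam * (pistar (lam / mu) m - p s m) - INR (S m) * mu * gap m s)
    with (0 - (INR (S m) * mu * (1 - sum_f_R0 (p s) m) - lam * p s m))
    by (unfold gap; lra).
  apply (is_derive_minus (fun _ => sum_f_R0 (pistar (lam / mu)) m)).
  { apply (is_derive_const (sum_f_R0 (pistar (lam / mu)) m) s). }
  rewrite <- (forward_partial_sum lam mu (p s) 1 m) by (apply Hsum; lra).
  apply is_derive_sum_f_R0. intros j. apply Hfwd, Hs.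
Qed.

Lemma is_derive_scaled_gap_0 s : 0 < s -> is_derive (scaled_gap 0) s 0.
Proof.
  intros Hs. apply is_derive_mult_exp with (1 := is_derive_gap 0 s Hs).
  unfold gap, decay_rate. simpl. ring.
Qed.

Lemma is_derive_scaled_gap_S m s : 0 < s ->
  is_derive (scaled_gap (S m)) s (lam * exp (mu * s) * scaled_gap m s).
Proof.
  intros Hs. apply is_derive_mult_exp with (1 := is_derive_gap (S m) s Hs).
  assert (Hexp : exp (decay_rate (S m) * s) = exp (mu * s) * exp (decay_rate m * s)).
  { rewrite <- exp_plus. f_equal. unfold decay_rate. rewrite (S_INR (S m)). ring. }
  unfold scaled_gap. rewrite Hexp. unfold gap, decay_rate. simpl sum_f_R0. ring.
Qed.

Lemma scaled_gap_right_cont m :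
  filterlim (scaled_gap m) (at_right 0) (locally (scaled_gap m 0)).
Proof.
  destruct Hp as (Hinit & _ & _ & Hcont & _).
  apply filterlim_Rmult.
  - apply filterlim_Rplus; [apply filterlim_const|apply filterlim_Ropp, filterlim_sum_f_R0].
    intros j. rewrite Hinit. apply Hcont.
  - apply (filterlim_at_right_continuous (fun s => exp (decay_rate m * s))).
    apply (ex_derive_continuous (K := R_AbsRing) (V := R_NormedModule)). auto_derive. exact I.
Qed.

Lemma scaled_gap_bound M m s : (forall k, Rabs (gap k 0) <= M) -> 0 <= s ->
  Rabs (scaled_gap m s) <= M * envelope m s.
Proof.
  intros HM. revert s. induction m as [|m IH]; intros s Hs.
  - apply (abs_le_of_derive_abs_le (scaled_gap 0) (fun x => M * envelope 0 x)
             (fun _ => 0) (fun _ => M * 0) 0 s Hs).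
    + intros x Hx. apply is_derive_scaled_gap_0. lra.
    + intros x _. apply is_derive_scal, is_derive_envelope_0.
    + intros x _. rewrite Rabs_R0. lra.
    + apply scaled_gap_right_cont.
    + apply filterlim_Rmult; [apply filterlim_const|apply envelope_right_cont].
    + unfold scaled_gap. rewrite envelope_at_0, Rmult_0_r, exp_0, !Rmult_1_r. apply HM.
  - apply (abs_le_of_derive_abs_le (scaled_gap (S m)) (fun x => M * envelope (S m) x)
             (fun x => lam * exp (mu * x) * scaled_gap m x)
             (fun x => M * (lam * exp (mu * x) * envelope m x)) 0 s Hs).
    + intros x Hx. apply is_derive_scaled_gap_S. lra.
    + intros x _. apply is_derive_scal, is_derive_envelope_S.
    + intros x Hx.
      assert (Hrate : 0 <= lam * exp (mu * x))
        by (apply Rlt_le, Rmult_lt_0_compat; [lra|apply exp_pos]).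
      rewrite Rabs_mult, (Rabs_pos_eq _ Hrate).
      replace (M * (lam * exp (mu * x) * envelope m x))
        with (lam * exp (mu * x) * (M * envelope m x)) by ring.
      apply Rmult_le_compat_l; [exact Hrate|apply IH; lra].
    + apply scaled_gap_right_cont.
    + apply filterlim_Rmult; [apply filterlim_const|apply envelope_right_cont].
    + unfold scaled_gap. rewrite envelope_at_0, Rmult_0_r, exp_0, !Rmult_1_r. apply HM.
Qed.

Lemma gap_bound M m t : (forall k, Rabs (gap k 0) <= M) -> 0 <= t ->
  Rabs (gap m t) <= M * exp (- mu * t - lam / mu * (exp (- mu * t) + mu * t - 1)).
Proof.
  intros HM Ht.
  assert (HM0 : 0 <= M) by (apply Rle_trans with (2 := HM 0%nat), Rabs_pos).
  replace (gap m t) with (scaled_gap m t * exp (- decay_rate m * t))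
    by (unfold scaled_gap; rewrite Rmult_assoc, <- exp_plus, Ropp_mult_distr_l_reverse,
          Rplus_opp_r, exp_0; ring).
  rewrite Rabs_mult, (Rabs_pos_eq (exp _)) by (left; apply exp_pos).
  apply Rle_trans with (M * envelope m t * exp (- decay_rate m * t)).
  - apply Rmult_le_compat_r; [left; apply exp_pos|apply scaled_gap_bound; assumption].
  - rewrite Rmult_assoc. apply Rmult_le_compat_l; [exact HM0|apply envelope_decay_le, Ht].
Qed.

End Marginal.

End Chain.

Theorem mainTheorem5 (lam mu : R) (tau : nat -> R) (p : R -> nat -> R) (t : R) :
  0 < lam -> 0 < mu ->
  (forall n, 0 <= tau n) -> is_series tau 1 ->
  is_marginal_law lam mu tau p ->
  0 <= t ->
  Rbar_le
    (sup_dist (cdf (pistar (lam / mu))) (cdf (p t)))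
    (Rbar_mult (sup_dist (cdf (pistar (lam / mu))) (cdf tau))
       (Finite (exp (- mu * t - (lam / mu) * (exp (- mu * t) + mu * t - 1))))).
Proof.
  (* The hypotheses on tau are implied by is_marginal_law at time 0. *)
  intros Hlam Hmu _ _ Hp Ht.
  assert (Hgap0 : forall m, Rbar_le (Rabs (gap lam mu p m 0))
                              (sup_dist (cdf (pistar (lam / mu))) (cdf tau))).
  { intros m. unfold gap. rewrite (sum_eq (p 0) tau) by (intros j _; apply Hp).
    apply sum_dist_le_sup_dist. }
  revert Hgap0. destruct (sup_dist (cdf (pistar (lam / mu))) (cdf tau)) as [M| |]; intros Hgap0.
  - apply sup_dist_le.
    + apply Rmult_le_pos; [|left; apply exp_pos].
      apply Rle_trans with (2 := Hgap0 0%nat), Rabs_pos.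
    + intros m. apply (gap_bound lam mu Hlam Hmu tau p Hp); [exact Hgap0|exact Ht].
  - rewrite (is_Rbar_mult_unique _ _ _ (is_Rbar_mult_p_infty_pos (Finite (exp _)) (exp_pos _))).
    destruct (sup_dist _ _); exact I.
  - destruct (Hgap0 0%nat).
Qed.
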